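(* Let $S$ be a set of $n\ge 3$ points in the plane, let the underlying metric be the Euclidean metric, and let $v>1$ be the highway speed. Then a horizontal highway minimizing the travel-time diameter of $S$ among all horizontal highways can be computed in $O(n)$ time.
   Context: A highway is a straight line $h$. One travels with speed $1$ off the highway (distances measured in the Euclidean metric) and with speed $v$ along the highway. The travel time $t_h(p,q)$ is the minimum time of a path from $p$ to $q$ under these speeds; the travel-time diameter of $S$ for highway $h$ is $\max_{p,q\in S}t_h(p,q)$. *)

From HB Require Import structures.
From mathcomp Require Import all_boot all_order all_algebra.
From mathcomp Require Import all_classical all_reals.
Set Implicit Arguments. Unset Strict Implicit. Unset Printing Implicit Defensive.
Import Order.TTheory GRing.Theory Num.Theory.
Local Open Scope ring_scope.
Local Open Scope classical_set_scope.

Section Geometry.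
Variable R : realType.

Definition edist (p q : R * R) : R :=
  Num.sqrt ((p.1 - q.1) ^+ 2 + (p.2 - q.2) ^+ 2).

(* Travel time between p and q for the horizontal highway h = {y = c},
   speed 1 off the highway and speed v on it: either walk directly, or walk
   to a highway point (a, c), travel along h to (b, c), and walk to q. *)
Definition htime (v c : R) (p q : R * R) : R :=
  Num.min (edist p q)
    (inf [set t | exists a b : R,
            t = edist p (a, c) + `|a - b| / v + edist (b, c) q]).

Definition hdiam (v c : R) (S : seq (R * R)) : R :=
  \big[Num.max/0]_(p <- S) \big[Num.max/0]_(q <- S) htime v c p q.

End Geometry.

(* Model of computation: unit-cost real RAM.                           *)
(* Integer (nat) registers with +, - (truncated) used for indexing;    *)
(* an unbounded real memory with + - * / sqrt and comparisons; no      *)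
(* real-to-integer conversion (no floor).                              *)
Inductive aexp : Type :=
| ANum of nat
| AReg of nat
| AAdd of aexp & aexp
| ASub of aexp & aexp.

Inductive rexp : Type :=
| RNat of nat
| RMem of aexp
| RAdd of rexp & rexp
| RSub of rexp & rexp
| RMul of rexp & rexp
| RDiv of rexp & rexp
| RSqrt of rexp.

Inductive bexp : Type :=
| BRLt of rexp & rexp
| BRLe of rexp & rexp
| BALt of aexp & aexp
| BAEq of aexp & aexp
| BAnd of bexp & bexp
| BNot of bexp.

Inductive com : Type :=
| CSkip
| CNAsgn of nat & aexp
| CRStore of aexp & rexp
| CSeq of com & com
| CIf of bexp & com & com
| CWhile of bexp & com.

Section RAM.
Variable R : realType.

Record ramstate := RamState { nreg : nat -> nat; rmem : nat -> R }.

Fixpoint aeval (s : ramstate) (a : aexp) : nat :=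
  match a with
  | ANum k => k
  | AReg k => nreg s k
  | AAdd a1 a2 => (aeval s a1 + aeval s a2)%N
  | ASub a1 a2 => (aeval s a1 - aeval s a2)%N
  end.

Fixpoint reval (s : ramstate) (e : rexp) : R :=
  match e with
  | RNat k => k%:R
  | RMem a => rmem s (aeval s a)
  | RAdd e1 e2 => reval s e1 + reval s e2
  | RSub e1 e2 => reval s e1 - reval s e2
  | RMul e1 e2 => reval s e1 * reval s e2
  | RDiv e1 e2 => reval s e1 / reval s e2
  | RSqrt e1 => Num.sqrt (reval s e1)
  end.

Fixpoint beval (s : ramstate) (b : bexp) : bool :=
  match b with
  | BRLt e1 e2 => reval s e1 < reval s e2
  | BRLe e1 e2 => reval s e1 <= reval s e2
  | BALt a1 a2 => (aeval s a1 < aeval s a2)%N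
  | BAEq a1 a2 => aeval s a1 == aeval s a2
  | BAnd b1 b2 => beval s b1 && beval s b2
  | BNot b1 => ~~ beval s b1
  end.

Definition nupd (s : ramstate) (k m : nat) : ramstate :=
  RamState (fun j => if j == k then m else nreg s j) (rmem s).

Definition rupd (s : ramstate) (k : nat) (x : R) : ramstate :=
  RamState (nreg s) (fun j => if j == k then x else rmem s j).

Inductive exec : com -> ramstate -> nat -> ramstate -> Prop :=
| ExSkip s : exec CSkip s 1 s
| ExNAsgn k a s : exec (CNAsgn k a) s 1 (nupd s k (aeval s a))
| ExRStore a e s : exec (CRStore a e) s 1 (rupd s (aeval s a) (reval s e))
| ExSeq c1 c2 s s1 s2 t1 t2 :
    exec c1 s t1 s1 -> exec c2 s1 t2 s2 -> exec (CSeq c1 c2) s (t1 + t2) s2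
| ExIfT b c1 c2 s s' t :
    beval s b -> exec c1 s t s' -> exec (CIf b c1 c2) s t.+1 s'
| ExIfF b c1 c2 s s' t :
    ~~ beval s b -> exec c2 s t s' -> exec (CIf b c1 c2) s t.+1 s'
| ExWhileF b c s : ~~ beval s b -> exec (CWhile b c) s 1 s
| ExWhileT b c s s1 s2 t1 t2 :
    beval s b -> exec c s t1 s1 -> exec (CWhile b c) s1 t2 s2 ->
    exec (CWhile b c) s (t1 + t2).+1 s2.

(* Input encoding: nat register 0 holds n; mem[0] = v;
   mem[2i+1] = x_i, mem[2i+2] = y_i for the i-th point; all else 0.
   Output: the y-coordinate of the computed highway in mem[0]. *)
Definition init_state (v : R) (S : seq (R * R)) : ramstate :=
  RamState (fun j => if j == 0%N then size S else 0%N)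
           (fun j => if j == 0%N then v
                     else if odd j then (nth (0, 0) S j./2).1
                     else (nth (0, 0) S (j.-2)./2).2).

End RAM.

From HB Require Import structures.
From mathcomp Require Import all_boot all_order all_algebra.
From mathcomp Require Import all_classical all_reals.
From mathcomp Require Import ring lra zify.
Set Implicit Arguments. Unset Strict Implicit. Unset Printing Implicit Defensive.
Import Order.TTheory GRing.Theory Num.Theory.
Local Open Scope ring_scope.
Local Open Scope classical_set_scope.

(* Let beta = sqrt (v^2 - 1).  A pair p, q with |p_y - q_y| > beta |p_x - q_x|
   ("steep") gains nothing from a horizontal highway, whatever its height.
   For the other ("flat") pairs the travel time is at least
   (|p_x - q_x| + beta |p_y - q_y|) / v, and at most
   (|p_x - q_x| + beta (|p_y - c| + |q_y - c|)) / v for the highway y = c, the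
   cost of reaching and leaving it along slopes +-beta.  In the coordinates
   u = x + beta y and w = x - beta y, the lower bound reaches
   max (spread u, spread w) / v for every c, while the upper bound stays below
   it at a height computed from the four extremes of u and w.  A single scan
   computes these extremes in O(n) real-RAM steps, with max and min computed
   without branching as (a + b +- sqrt ((a - b)^2)) / 2. *)

Section Hypot.
Variable R : rcfType.
Implicit Types x y w b v : R.

Definition hypot x y := Num.sqrt (x ^+ 2 + y ^+ 2).

Lemma hypot_ge0 x y : 0 <= hypot x y.
Proof. exact: sqrtr_ge0. Qed.

Lemma sqr_hypot x y : hypot x y ^+ 2 = x ^+ 2 + y ^+ 2.
Proof. by rewrite sqr_sqrtr // addr_ge0 ?sqr_ge0. Qed.

Lemma hypot_norm x y : hypot `|x| `|y| = hypot x y.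
Proof. by rewrite /hypot !real_normK ?num_real. Qed.

Lemma sqr_le_norm x y : `|x| <= `|y| -> x ^+ 2 <= y ^+ 2.
Proof.
by move=> hxy; rewrite -(real_normK (num_real x)) -(real_normK (num_real y)) ler_sqr ?nnegrE.
Qed.

Lemma ler_hypot x y x' y' : `|x| <= `|x'| -> `|y| <= `|y'| -> hypot x y <= hypot x' y'.
Proof. by move=> hx hy; apply/ler_wsqrtr/lerD; apply: sqr_le_norm. Qed.

Lemma hypot_triangle x1 y1 x2 y2 :
  hypot (x1 + x2) (y1 + y2) <= hypot x1 y1 + hypot x2 y2.
Proof.
have h1 := sqr_hypot x1 y1; have h2 := sqr_hypot x2 y2.
have s10 := hypot_ge0 x1 y1; have s20 := hypot_ge0 x2 y2.
rewrite -ler_sqr ?nnegrE ?addr_ge0 ?hypot_ge0 // sqr_hypot.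
set s1 := hypot x1 y1 in h1 h2 s10 *; set s2 := hypot x2 y2 in h2 s20 *.
have cs : x1 * x2 + y1 * y2 <= s1 * s2.
  apply: le_trans (ler_norm _) _; rewrite -(ger0_norm (mulr_ge0 s10 s20)).
  rewrite -ler_sqr ?nnegrE // !real_normK ?num_real // exprMn h1 h2.
  by have := sqr_ge0 (x1 * y2 - x2 * y1); lra.
lra.
Qed.

Lemma addr_mul_le_hypot b v x y : 0 <= v -> b ^+ 2 = v ^+ 2 - 1 ->
  x + b * y <= v * hypot x y.
Proof.
move=> v0 hb; apply: le_trans (ler_norm _) _.
rewrite -ler_sqr ?nnegrE ?mulr_ge0 ?hypot_ge0 // real_normK ?num_real //.
rewrite exprMn sqr_hypot (_ : v ^+ 2 = b ^+ 2 + 1); last by lra.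
by have := sqr_ge0 (b * x - y); nra.
Qed.

Lemma mul_le_hypot b v x y : 0 <= v -> b ^+ 2 = v ^+ 2 - 1 -> 0 <= x ->
  `|b * x| <= `|y| -> v * x <= hypot x y.
Proof.
move=> v0 hb x0 hbx; rewrite -ler_sqr ?nnegrE ?mulr_ge0 ?hypot_ge0 //.
have := sqr_le_norm hbx; rewrite sqr_hypot !exprMn (_ : v ^+ 2 = b ^+ 2 + 1); lra.
Qed.

(* The difference quotient (x + w) / (hypot x y + hypot w y) is at most 1 / v
   because v x <= hypot x y. *)
Lemma hypot_subl_le b v w x y : 0 < v -> b ^+ 2 = v ^+ 2 - 1 -> 0 <= w <= x ->
  `|b * x| <= `|y| -> hypot x y - hypot w y <= (x - w) / v.
Proof.
move=> v0 hb /andP[w0 wx] hbx.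
have hbw : `|b * w| <= `|y|.
  apply: le_trans hbx; rewrite !normrM ler_wpM2l // !ger0_norm //; exact: le_trans wx.
have vx := mul_le_hypot (ltW v0) hb (le_trans w0 wx) hbx.
have vw := mul_le_hypot (ltW v0) hb w0 hbw.
have key : (hypot x y - hypot w y) * (hypot x y + hypot w y) = (x - w) * (x + w).
  by rewrite -subr_sqr !sqr_hypot; ring.
have := hypot_ge0 x y; have := hypot_ge0 w y.
set s := hypot x y in vx key *; set m := hypot w y in vw key * => m0 s0.
rewrite ler_pdivlMr //; have [sm|ms] := lerP (s - m) 0; first by nra.
rewrite -(ler_pM2r (_ : 0 < s + m)); last by lra.
by rewrite mulrAC key -mulrA; apply: ler_wpM2l; lra.
Qed.

End Hypot.

(* The access paths of slope +-beta are optimal (Snell's law: the angle with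
   the highway has cosine 1 / v). *)
Definition critical_slope {R : rcfType} (v : R) := Num.sqrt (v ^+ 2 - 1).

Section Highway.
Variables (R : realType) (v : R).
Hypothesis v_gt1 : 1 < v.
Local Notation beta := (critical_slope v).
Implicit Types (a b c d x y : R) (p q : R * R).

Lemma v_gt0 : 0 < v.
Proof. exact: lt_trans v_gt1. Qed.

Lemma critical_slope_gt0 : 0 < beta.
Proof. by rewrite sqrtr_gt0; have := v_gt1; nra. Qed.

Lemma sqr_critical_slope : beta ^+ 2 = v ^+ 2 - 1.
Proof. by rewrite sqr_sqrtr //; have := v_gt1; nra. Qed.

Lemma leg_le x y : `|x| + beta * `|y| <= v * hypot x y.
Proof.
rewrite -hypot_norm; apply: addr_mul_le_hypot sqr_critical_slope.
exact: ltW v_gt0.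
Qed.

Lemma critical_leg d : 0 <= d -> hypot (d / beta) d = d * v / beta.
Proof.
move=> d0; have b0 := critical_slope_gt0.
rewrite /hypot (_ : _ + _ = (d * v / beta) ^+ 2); last first.
  rewrite !expr_div_n exprMn (_ : v ^+ 2 = beta ^+ 2 + 1).
    by field; rewrite gt_eqF.
  by rewrite sqr_critical_slope; ring.
by rewrite sqrtr_sqr ger0_norm // divr_ge0 ?mulr_ge0 // ltW ?v_gt0.
Qed.

Lemma edistE p q : edist p q = hypot (p.1 - q.1) (p.2 - q.2).
Proof. by []. Qed.

Lemma edistC p q : edist p q = edist q p.
Proof. by rewrite !edistE -hypot_norm distrC [`|_ - q.2|]distrC hypot_norm. Qed.

Definition via_highway c p q a b := edist p (a, c) + `|a - b| / v + edist (b, c) q.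

Lemma via_highway_ge0 c p q a b : 0 <= via_highway c p q a b.
Proof. by rewrite !addr_ge0 ?hypot_ge0 ?divr_ge0 // ltW ?v_gt0. Qed.

Lemma via_highway_ge_flat c p q a b :
  (`|p.1 - q.1| + beta * (`|p.2 - c| + `|q.2 - c|)) / v <= via_highway c p q a b.
Proof.
have v0 := v_gt0; rewrite ler_pdivrMr // /via_highway !edistE /=.
have l1 := leg_le (p.1 - a) (p.2 - c); have l2 := leg_le (b - q.1) (c - q.2).
have t1 := ler_distD a p.1 q.1; have t2 := ler_distD b a q.1.
rewrite [`|c - q.2|]distrC in l2.
have -> : (hypot (p.1 - a) (p.2 - c) + `|a - b| / v + hypot (b - q.1) (c - q.2)) * v =
    v * hypot (p.1 - a) (p.2 - c) + `|a - b| + v * hypot (b - q.1) (c - q.2).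
  by field; rewrite gt_eqF.
lra.
Qed.

(* Merge the two legs into one with the summed offsets (triangle inequality);
   as the pair is steep, stretching its horizontal side to the full distance
   costs no more than covering the difference on the highway. *)
Lemma via_highway_ge_steep c p q a b : beta * `|p.1 - q.1| < `|p.2 - q.2| ->
  edist p q <= via_highway c p q a b.
Proof.
move=> steep; have v0 := v_gt0; have b0 := critical_slope_gt0.
rewrite /via_highway !edistE /=.
set X := `|p.1 - q.1| in steep *; set Y := `|p.2 - q.2| in steep *.
set w := `|p.1 - a| + `|b - q.1|; set D := `|p.2 - c| + `|c - q.2|.
have legs : hypot w D <= hypot (p.1 - a) (p.2 - c) + hypot (b - q.1) (c - q.2).
  rewrite -[hypot (p.1 - a) _]hypot_norm -[hypot (b - q.1) _]hypot_norm.
  exact: hypot_triangle.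
have hX : X <= w + `|a - b|.
  by have := ler_distD a p.1 q.1; have := ler_distD b a q.1; rewrite /w /X; lra.
have hY : Y <= D by rewrite /Y /D; apply: ler_distD.
have w0 : 0 <= w by rewrite addr_ge0.
have X0 : 0 <= X := normr_ge0 _; have Y0 : 0 <= Y := normr_ge0 _.
have D0 : 0 <= D := le_trans Y0 hY.
have hab : 0 <= `|a - b| / v by rewrite divr_ge0 // ltW.
rewrite -hypot_norm -/X -/Y.
have [Xw|wX] := lerP X w.
  have : hypot X Y <= hypot w D by apply: ler_hypot; rewrite !ger0_norm.
  lra.
have hD : `|beta * X| <= `|D|.
  by rewrite !ger0_norm ?mulr_ge0 ?(ltW b0) // (ltW (lt_le_trans steep hY)).
have := hypot_subl_le v0 sqr_critical_slope (introT andP (conj w0 (ltW wX))) hD.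
have : hypot X Y <= hypot X D by apply: ler_hypot; rewrite !ger0_norm.
have : (X - w) / v <= `|a - b| / v by rewrite ler_pM2r ?invr_gt0 //; lra.
lra.
Qed.

Lemma htimeE c p q : htime v c p q =
  Num.min (edist p q) (inf [set t | exists a b, t = via_highway c p q a b]).
Proof. by []. Qed.

Lemma htimeC c p q : htime v c p q = htime v c q p.
Proof.
rewrite !htimeE edistC; congr (Num.min _ (inf _)); apply/seteqP.
by split=> _ [a [b ->]]; exists b, a;
  rewrite /via_highway edistC [edist (b, c) _]edistC distrC; ring.
Qed.

Lemma via_highway_set_neq0 c p q :
  [set t | exists a b, t = via_highway c p q a b] !=set0.
Proof. by exists (via_highway c p q 0 0), 0, 0. Qed.

Lemma htime_le_edist c p q : htime v c p q <= edist p q.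
Proof. by rewrite htimeE ge_min lexx. Qed.

Lemma htime_le_via_highway c p q a b : htime v c p q <= via_highway c p q a b.
Proof.
rewrite htimeE ge_min; apply/orP; right; apply: ge_inf; last by exists a, b.
by exists 0 => _ [a' [b' ->]]; apply: via_highway_ge0.
Qed.

Lemma htime_ge_flat c p q : (`|p.1 - q.1| + beta * `|p.2 - q.2|) / v <= htime v c p q.
Proof.
have v0 := v_gt0; rewrite htimeE le_min; apply/andP; split.
  by rewrite ler_pdivrMr // [_ * v]mulrC edistE; apply: leg_le.
apply: lb_le_inf (via_highway_set_neq0 c p q) _ => _ [a [b ->]].
apply: le_trans (via_highway_ge_flat c p q a b); rewrite ler_pM2r ?invr_gt0 // lerD2l.
by rewrite ler_pM2l ?critical_slope_gt0 // [`|q.2 - c|]distrC; apply: ler_distD.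
Qed.

Lemma htime_ge_steep c p q : beta * `|p.1 - q.1| < `|p.2 - q.2| ->
  edist p q <= htime v c p q.
Proof.
move=> steep; rewrite htimeE le_min lexx.
apply: lb_le_inf (via_highway_set_neq0 c p q) _ => _ [a [b ->]].
exact: via_highway_ge_steep.
Qed.

Lemma via_highway_critical c p q : p.1 <= q.1 ->
  `|p.2 - c| + `|q.2 - c| <= beta * (q.1 - p.1) ->
  via_highway c p q (p.1 + `|p.2 - c| / beta) (q.1 - `|q.2 - c| / beta) =
  (q.1 - p.1 + beta * (`|p.2 - c| + `|q.2 - c|)) / v.
Proof.
move=> pq crit; have v0 := v_gt0; have b0 := critical_slope_gt0.
set d1 := `|p.2 - c|; set d2 := `|q.2 - c|.
have d10 : 0 <= d1 := normr_ge0 _; have d20 : 0 <= d2 := normr_ge0 _.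
have leg1 : hypot (p.1 - (p.1 + d1 / beta)) (p.2 - c) = d1 * v / beta.
  rewrite (_ : p.1 - _ = - (d1 / beta)); last by ring.
  by rewrite -hypot_norm normrN ger0_norm ?divr_ge0 ?(ltW b0) // -/d1 critical_leg.
have leg2 : hypot (q.1 - d2 / beta - q.1) (c - q.2) = d2 * v / beta.
  rewrite (_ : q.1 - _ - q.1 = - (d2 / beta)); last by ring.
  by rewrite -hypot_norm normrN ger0_norm ?divr_ge0 ?(ltW b0) // distrC -/d2 critical_leg.
rewrite /via_highway !edistE /= leg1 leg2.
have -> : p.1 + d1 / beta - (q.1 - d2 / beta) = - (q.1 - p.1 - (d1 + d2) / beta).
  by field; rewrite gt_eqF.
rewrite normrN ger0_norm; last by rewrite subr_ge0 ler_pdivrMr // mulrC.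
apply/eqP; rewrite -subr_eq0; apply/eqP.
have -> : d1 * v / beta + (q.1 - p.1 - (d1 + d2) / beta) / v + d2 * v / beta -
  (q.1 - p.1 + beta * (d1 + d2)) / v = (d1 + d2) * (v ^+ 2 - 1 - beta ^+ 2) / (v * beta).
  by field; rewrite !gt_eqF.
by rewrite sqr_critical_slope subrr mulr0 mul0r.
Qed.

Lemma htime_le_flat c p q : `|p.2 - q.2| <= beta * `|p.1 - q.1| ->
  htime v c p q <= (`|p.1 - q.1| + beta * (`|p.2 - c| + `|q.2 - c|)) / v.
Proof.
wlog pq : p q / p.1 <= q.1.
  move=> H; have [pq|qp] := leP p.1 q.1; first exact: H.
  rewrite htimeC [`|p.1 - q.1|]distrC [`|p.2 - q.2|]distrC [`|p.2 - c| + _]addrC.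
  by apply: H; apply: ltW.
rewrite [`|p.1 - q.1|]distrC [`|q.1 - p.1|]ger0_norm ?subr_ge0 // => flat.
have v0 := v_gt0; have b0 := critical_slope_gt0.
have [crit|] := lerP (`|p.2 - c| + `|q.2 - c|) (beta * (q.1 - p.1)).
  by rewrite -via_highway_critical //; apply: htime_le_via_highway.
move=> /ltW steep_c; apply: le_trans (htime_le_edist c p q) _.
have X0 : 0 <= q.1 - p.1 by rewrite subr_ge0.
have : edist p q <= v * (q.1 - p.1).
  rewrite edistE -hypot_norm [`|p.1 - q.1|]distrC [`|q.1 - p.1|]ger0_norm //.
  rewrite mulrC; have := critical_leg (mulr_ge0 X0 (ltW b0)).
  rewrite mulfK ?gt_eqF // mulrAC mulfK ?gt_eqF // => <-.
  apply: ler_hypot => //.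
  by rewrite normr_id [`|_ * beta|]ger0_norm ?mulr_ge0 ?(ltW b0) // mulrC.
suff : v * (q.1 - p.1) <= (q.1 - p.1 + beta * (`|p.2 - c| + `|q.2 - c|)) / v by lra.
rewrite ler_pdivlMr // mulrAC -expr2 (_ : v ^+ 2 = beta ^+ 2 + 1); last first.
  by rewrite sqr_critical_slope; ring.
have : beta * (beta * (q.1 - p.1)) <= beta * (`|p.2 - c| + `|q.2 - c|).
  by rewrite ler_pM2l.
lra.
Qed.

Lemma le_hdiam c S p q : p \in S -> q \in S -> htime v c p q <= hdiam v c S.
Proof.
move=> pS qS; apply: le_trans (le_bigmax_seq 0 _ xpredT _ pS isT).
exact: (le_bigmax_seq 0 _ xpredT (htime v c p) qS isT).
Qed.

Lemma hdiam_ge0 c S : 0 <= hdiam v c S.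
Proof. exact: bigmax_ge_id. Qed.

Lemma hdiam_le c S t : 0 <= t -> {in S &, forall p q, htime v c p q <= t} ->
  hdiam v c S <= t.
Proof.
move=> t0 ht; rewrite /hdiam big_seq; apply: bigmax_le => // p pS.
by rewrite big_seq; apply: bigmax_le => // q qS; apply: ht.
Qed.

Definition tilt_add p := p.1 + beta * p.2.
Definition tilt_sub p := p.1 - beta * p.2.

Definition minmax_on S (f : R * R -> R) lo hi :=
  [/\ {in S, forall p, lo <= f p /\ f p <= hi}, lo \in map f S & hi \in map f S].

(* The lowest height at which the flat pairs lying above the highway cost at
   most the spread; pairs below it, or on both sides of it, then do as well. *)
Definition best_height lo1 hi1 lo2 hi2 :=
  (hi1 - lo2 - Num.max (hi1 - lo1) (hi2 - lo2)) / (2 * beta).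

Section Extremes.
Variables (S : seq (R * R)) (lo1 hi1 lo2 hi2 : R).
Hypothesis add_range : minmax_on S tilt_add lo1 hi1.
Hypothesis sub_range : minmax_on S tilt_sub lo2 hi2.
Local Notation spread := (Num.max (hi1 - lo1) (hi2 - lo2)).
Local Notation c0 := (best_height lo1 hi1 lo2 hi2).

Lemma spread_le_hdiam c : spread / v <= hdiam v c S.
Proof.
have v0 := v_gt0; have b0 := critical_slope_gt0.
have pair_le p q d : p \in S -> q \in S ->
    d <= `|p.1 - q.1| + beta * `|p.2 - q.2| -> d / v <= hdiam v c S.
  move=> pS qS hd; apply: le_trans (le_hdiam c pS qS).
  by apply: le_trans (htime_ge_flat c p q); rewrite ler_pM2r ?invr_gt0.
have [_ /mapP[q1 q1S ->] /mapP[p1 p1S ->]] := add_range.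
have [_ /mapP[q2 q2S ->] /mapP[p2 p2S ->]] := sub_range.
rewrite ler_pdivrMr // ge_max -!ler_pdivrMr //; apply/andP; split.
  apply: (pair_le p1 q1) => //; rewrite /tilt_add.
  have := ler_norm (p1.1 - q1.1); have := ler_norm (p1.2 - q1.2).
  by move=> h1 h2; have := ler_wpM2l (ltW b0) h1; lra.
apply: (pair_le p2 q2) => //; rewrite /tilt_sub.
have := ler_norm (p2.1 - q2.1); have := ler_norm (q2.2 - p2.2); rewrite [`|q2.2 - _|]distrC.
by move=> h1 h2; have := ler_wpM2l (ltW b0) h1; lra.
Qed.

Lemma flat_cost_le p q : p \in S -> q \in S ->
  `|p.1 - q.1| + beta * (`|p.2 - c0| + `|q.2 - c0|) <= spread.
Proof.
move=> pS qS; have b0 := critical_slope_gt0.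
have [/(_ p pS) [hp1 hp2] _ _] := add_range; have [/(_ q qS) [hq1 hq2] _ _] := add_range.
have [/(_ p pS) [hp3 hp4] _ _] := sub_range; have [/(_ q qS) [hq3 hq4] _ _] := sub_range.
move: hp1 hp2 hp3 hp4 hq1 hq2 hq3 hq4; rewrite /tilt_add /tilt_sub => *.
have M1 : hi1 - lo1 <= spread by rewrite le_max lexx.
have M2 : hi2 - lo2 <= spread by rewrite le_max lexx orbT.
have hc : 2 * (beta * c0) = hi1 - lo2 - spread.
  by rewrite /best_height; field; rewrite gt_eqF.
have normE x : `|x| = x \/ `|x| = - x by have [] := ger0P x; [left | right].
by case: (normE (p.1 - q.1)) => ->; case: (normE (p.2 - c0)) => ->;
  case: (normE (q.2 - c0)) => ->; lra.
Qed.

Lemma best_height_optimal c : hdiam v c0 S <= hdiam v c S.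
Proof.
have v0 := v_gt0; apply: hdiam_le (hdiam_ge0 c S) _ => p q pS qS.
have [steep|flat] := ltrP (beta * `|p.1 - q.1|) `|p.2 - q.2|.
  apply: le_trans (htime_le_edist _ p q) _; apply: le_trans (le_hdiam c pS qS).
  exact: htime_ge_steep.
apply: le_trans (htime_le_flat _ flat) _; apply: le_trans (spread_le_hdiam c).
by rewrite ler_pM2r ?invr_gt0 //; apply: flat_cost_le.
Qed.

End Extremes.

End Highway.

Section FoldExtremes.
Context {d : Order.disp_t} {T : orderType d}.
Implicit Types (x y : T) (s : seq T).

Lemma foldl_max_ge x s y : y \in x :: s -> (y <= foldl Order.max x s)%O.
Proof.
elim: s x y => [|z s IH] x y; first by rewrite mem_seq1 => /eqP->.
rewrite /= !inE => /or3P[/eqP-> | /eqP-> | ys]; last by apply: IH; rewrite inE ys orbT.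
  by apply: le_trans _ (IH _ _ (mem_head _ _)); rewrite le_max lexx.
by apply: le_trans _ (IH _ _ (mem_head _ _)); rewrite le_max lexx orbT.
Qed.

Lemma foldl_min_le x s y : y \in x :: s -> (foldl Order.min x s <= y)%O.
Proof.
elim: s x y => [|z s IH] x y; first by rewrite mem_seq1 => /eqP->.
rewrite /= !inE => /or3P[/eqP-> | /eqP-> | ys]; last by apply: IH; rewrite inE ys orbT.
  by apply: le_trans (IH _ _ (mem_head _ _)) _; rewrite ge_min lexx.
by apply: le_trans (IH _ _ (mem_head _ _)) _; rewrite ge_min lexx orbT.
Qed.

Lemma foldl_max_mem x s : foldl Order.max x s \in x :: s.
Proof.
elim: s x => [|z s IH] x /=; first exact: mem_head.
have := IH (Order.max x z); rewrite !inE => /orP[/eqP->|->]; last by rewrite !orbT.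
by case: leP; rewrite eqxx ?orbT.
Qed.

Lemma foldl_min_mem x s : foldl Order.min x s \in x :: s.
Proof.
elim: s x => [|z s IH] x /=; first exact: mem_head.
have := IH (Order.min x z); rewrite !inE => /orP[/eqP->|->]; last by rewrite !orbT.
by case: leP; rewrite eqxx ?orbT.
Qed.

End FoldExtremes.

Lemma maxr_sqrt (R : rcfType) (a e : R) :
  Num.max a e = (a + e + Num.sqrt ((a - e) * (a - e))) / 2%:R.
Proof.
by rewrite -expr2 sqrtr_sqr; case: (leP a e) => h; [rewrite ler0_norm|rewrite gtr0_norm]; lra.
Qed.

Lemma minr_sqrt (R : rcfType) (a e : R) :
  Num.min a e = (a + e - Num.sqrt ((a - e) * (a - e))) / 2%:R.
Proof.
by rewrite -expr2 sqrtr_sqr; case: (leP a e) => h; [rewrite ler0_norm|rewrite gtr0_norm]; lra.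
Qed.

Definition rmax a e := RDiv (RAdd (RAdd a e) (RSqrt (RMul (RSub a e) (RSub a e)))) (RNat 2).
Definition rmin a e := RDiv (RSub (RAdd a e) (RSqrt (RMul (RSub a e) (RSub a e)))) (RNat 2).

Lemma reval_rmax (R : realType) (s : ramstate R) a e :
  reval s (rmax a e) = Num.max (reval s a) (reval s e).
Proof. by rewrite maxr_sqrt. Qed.

Lemma reval_rmin (R : realType) (s : ramstate R) a e :
  reval s (rmin a e) = Num.min (reval s a) (reval s e).
Proof. by rewrite minr_sqrt. Qed.

(* Registers: 0 holds n, 1 the address 2i+1 of the current point, 2 the base
   address b = 2n+1, 3 the loop counter i.  Cell b holds the critical slope
   and cells b+1, ..., b+4 the running max and min of [tilt_add] and
   [tilt_sub]. *)
Definition cur_x := RMem (AReg 1).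
Definition cur_y := RMem (AAdd (AReg 1) (ANum 1)).
Definition slope := RMem (AReg 2).
Definition cur_tilt_add := RAdd cur_x (RMul slope cur_y).
Definition cur_tilt_sub := RSub cur_x (RMul slope cur_y).
Definition ext k := AAdd (AReg 2) (ANum k).
Definition ext_val k := RMem (ext k).

Definition prelude :=
  CSeq (CNAsgn 2 (AAdd (AAdd (AReg 0) (AReg 0)) (ANum 1)))
  (CSeq (CRStore (AReg 2) (RSqrt (RSub (RMul (RMem (ANum 0)) (RMem (ANum 0))) (RNat 1))))
  (CSeq (CNAsgn 1 (ANum 1))
  (CSeq (CNAsgn 3 (ANum 0))
  (CSeq (CRStore (ext 1) cur_tilt_add)
  (CSeq (CRStore (ext 2) cur_tilt_add)
  (CSeq (CRStore (ext 3) cur_tilt_sub)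
        (CRStore (ext 4) cur_tilt_sub))))))).

Definition scan_step :=
  CSeq (CRStore (ext 1) (rmax (ext_val 1) cur_tilt_add))
  (CSeq (CRStore (ext 2) (rmin (ext_val 2) cur_tilt_add))
  (CSeq (CRStore (ext 3) (rmax (ext_val 3) cur_tilt_sub))
  (CSeq (CRStore (ext 4) (rmin (ext_val 4) cur_tilt_sub))
  (CSeq (CNAsgn 1 (AAdd (AReg 1) (ANum 2)))
        (CNAsgn 3 (AAdd (AReg 3) (ANum 1))))))).

Definition scan_loop := CWhile (BALt (AReg 3) (AReg 0)) scan_step.

Definition best_height_exp :=
  RDiv (RSub (RSub (ext_val 1) (ext_val 4))
             (rmax (RSub (ext_val 1) (ext_val 2)) (RSub (ext_val 3) (ext_val 4))))
       (RMul (RNat 2) slope).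

Definition highway_prog :=
  CSeq prelude (CSeq scan_loop (CRStore (ANum 0) best_height_exp)).

Section Run.
Variables (R : realType) (v : R) (S : seq (R * R)).
Local Notation n := (size S).
Local Notation b := n.*2.+1.
Local Notation s0 := (init_state v S).
Local Notation pt i := (nth (0, 0) S i).

Definition frame (s : ramstate R) i :=
  [/\ nreg s 0 = n, nreg s 1 = i.*2.+1, nreg s 2 = b, nreg s 3 = i &
      (forall j, (j < b)%N -> rmem s j = rmem s0 j) /\ rmem s b = critical_slope v].

Definition scan op (f : R * R -> R) i := foldl op (f (pt 0)) (map f (take i S)).

Definition invariant s i := frame s i /\
  (rmem s (b + 1), rmem s (b + 2), rmem s (b + 3), rmem s (b + 4)) =
  (scan Num.max (tilt_add v) i, scan Num.min (tilt_add v) i,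
   scan Num.max (tilt_sub v) i, scan Num.min (tilt_sub v) i).

Lemma rmem_init_x i : rmem s0 i.*2.+1 = (pt i).1.
Proof. by rewrite /= odd_double /= uphalf_double. Qed.

Lemma rmem_init_y i : rmem s0 (i.*2.+1 + 1) = (pt i).2.
Proof. by rewrite addn1 /= odd_double /= doubleK. Qed.

Lemma frame_rupd s i k x : frame s i -> frame (rupd s (b + k.+1) x) i.
Proof.
case=> r0 r1 r2 r3 [mem sl]; split => //=; split.
  by move=> j jb; rewrite ifN_eq ?mem //; lia.
by rewrite ifN_eq //; lia.
Qed.

Lemma aeval_ext s i k : frame s i -> aeval s (ext k) = (b + k)%N.
Proof. by case=> _ _ r2 _ _; rewrite /= r2. Qed.

Lemma reval_ext_val s i k : frame s i -> reval s (ext_val k) = rmem s (b + k).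
Proof. by case=> _ _ r2 _ _; rewrite /= r2. Qed.

Lemma reval_cur_tilt_add s i : frame s i -> (i < n)%N ->
  reval s cur_tilt_add = tilt_add v (pt i).
Proof.
by case=> _ r1 r2 _ [mem sl] lt; rewrite /= r1 r2 sl !mem ?rmem_init_x ?rmem_init_y //; lia.
Qed.

Lemma reval_cur_tilt_sub s i : frame s i -> (i < n)%N ->
  reval s cur_tilt_sub = tilt_sub v (pt i).
Proof.
by case=> _ r1 r2 _ [mem sl] lt; rewrite /= r1 r2 sl !mem ?rmem_init_x ?rmem_init_y //; lia.
Qed.

Lemma exec_store_ext s i k e x c t s' : frame s i -> reval s e = x ->
  exec c (rupd s (b + k.+1) x) t s' -> exec (CSeq (CRStore (ext k.+1) e) c) s t.+1 s'.
Proof.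
move=> F <- h; have ek := aeval_ext k.+1 F.
by rewrite -ek in h; apply: (ExSeq (ExRStore _ _ _) h).
Qed.

Lemma scanS op f i : (i < n)%N -> scan op f i.+1 = op (scan op f i) (f (pt i)).
Proof. by move=> lt; rewrite /scan (take_nth (0, 0) lt) map_rcons foldl_rcons. Qed.

Lemma scan_step_run s i : invariant s i -> (i < n)%N ->
  exists s', exec scan_step s 6 s' /\ invariant s' i.+1.
Proof.
case=> F0 [e1 e2 e3 e4] lt.
pose x1 := Num.max (rmem s (b + 1)) (tilt_add v (pt i)).
pose x2 := Num.min (rmem s (b + 2)) (tilt_add v (pt i)).
pose x3 := Num.max (rmem s (b + 3)) (tilt_sub v (pt i)).
pose x4 := Num.min (rmem s (b + 4)) (tilt_sub v (pt i)).
have F1 := frame_rupd 0 x1 F0; have F2 := frame_rupd 1 x2 F1.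
have F3 := frame_rupd 2 x3 F2; have F4 := frame_rupd 3 x4 F3.
eexists; split.
  apply: (exec_store_ext F0 (x := x1)).
    by rewrite reval_rmax (reval_ext_val _ F0) (reval_cur_tilt_add F0 lt).
  apply: (exec_store_ext F1 (x := x2)).
    by rewrite reval_rmin (reval_ext_val _ F1) (reval_cur_tilt_add F1 lt) /= eqn_add2l.
  apply: (exec_store_ext F2 (x := x3)).
    by rewrite reval_rmax (reval_ext_val _ F2) (reval_cur_tilt_sub F2 lt) /= !eqn_add2l.
  apply: (exec_store_ext F3 (x := x4)).
    by rewrite reval_rmin (reval_ext_val _ F3) (reval_cur_tilt_sub F3 lt) /= !eqn_add2l.
  exact: ExSeq (ExNAsgn _ _ _) (ExNAsgn _ _ _).
split; last by rewrite /= !eqn_add2l /= !scanS // -e1 -e2 -e3 -e4.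
by case: F4 => r0 r1 r2 r3 M; split; rewrite //= ?r1 ?r3 //; lia.
Qed.

Lemma scan_loop_run k s i : (i + k)%N = n -> invariant s i ->
  exists s', exec scan_loop s (7 * k).+1 s' /\ invariant s' n.
Proof.
elim: k s i => [|k IH] s i ik inv.
  rewrite addn0 in ik; subst i; exists s; split => //; apply: ExWhileF.
  by case: inv => -[r0 _ _ r3 _] _; rewrite /= r0 r3 ltnn.
have lt : (i < n)%N by lia.
have [s1 [e1 inv1]] := scan_step_run inv lt.
have [s' [e2 inv']] := IH s1 i.+1 (etrans (addSnnS i k) ik) inv1.
exists s'; split => //; rewrite (_ : 7 * k.+1 = 6 + (7 * k).+1)%N; last by lia.
apply: ExWhileT e1 e2; by case: inv => -[r0 _ _ r3 _] _; rewrite /= r0 r3.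
Qed.

Lemma prelude_run : (0 < n)%N -> exists s, exec prelude s0 8 s /\ invariant s 0.
Proof.
move=> n0.
pose sA :=
  nupd (nupd (rupd (nupd s0 2 (n + n + 1)) (n + n + 1) (critical_slope v)) 1 1) 3 0.
have FA : frame sA 0.
  split; rewrite //= ?addnn ?addn1 //; split => [j jb|]; last by rewrite eqxx.
  by rewrite ifN_eq //; lia.
pose x1 := tilt_add v (pt 0); pose x2 := tilt_sub v (pt 0).
have F1 := frame_rupd 0 x1 FA; have F2 := frame_rupd 1 x1 F1; have F3 := frame_rupd 2 x2 F2.
eexists; split.
  apply: ExSeq (ExNAsgn _ _ _) _; apply: ExSeq (ExRStore _ _ _) _.
  apply: ExSeq (ExNAsgn _ _ _) _; apply: ExSeq (ExNAsgn _ _ _) _.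
  apply: (exec_store_ext FA (x := x1)); first exact: reval_cur_tilt_add FA n0.
  apply: (exec_store_ext F1 (x := x1)); first exact: reval_cur_tilt_add F1 n0.
  apply: (exec_store_ext F2 (x := x2)); first exact: reval_cur_tilt_sub F2 n0.
  exact: ExRStore.
rewrite (aeval_ext _ F3) (reval_cur_tilt_sub F3 n0); split; first exact: frame_rupd.
by rewrite /scan take0 /= !eqn_add2l.
Qed.

Lemma best_height_exp_val s : invariant s n ->
  reval s best_height_exp = best_height v
    (scan Num.min (tilt_add v) n) (scan Num.max (tilt_add v) n)
    (scan Num.min (tilt_sub v) n) (scan Num.max (tilt_sub v) n).
Proof.
case=> F [e1 e2 e3 e4]; rewrite /= -maxr_sqrt.
by case: F => _ _ r2 _ [_ sl]; rewrite r2 sl e1 e2 e3 e4.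
Qed.

Lemma scan_minmax f : (0 < n)%N -> minmax_on S f (scan Num.min f n) (scan Num.max f n).
Proof.
move=> n0; rewrite /scan take_size.
have f0 : f (pt 0) \in map f S by apply/map_f/mem_nth.
have in_map y : y \in f (pt 0) :: map f S -> y \in map f S.
  by rewrite inE => /predU1P[->|].
split; [move=> p pS | exact/in_map/foldl_min_mem | exact/in_map/foldl_max_mem].
have fp : f p \in f (pt 0) :: map f S by rewrite inE map_f ?orbT.
by split; [apply: foldl_min_le | apply: foldl_max_ge].
Qed.

End Run.

Theorem theorem4 :
  exists (P : com) (K : nat),
    forall (R : realType) (S : seq (R * R)) (v : R),
      (3 <= size S)%N -> uniq S -> 1 < v ->
      exists (t : nat) (s' : ramstate R),
        exec P (init_state v S) t s' /\ (t <= K * size S)%N /\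
        forall c : R, hdiam v (rmem s' 0) S <= hdiam v c S.
Proof.
exists highway_prog, 17%N => R S v n3 _ v1.
have n0 : (0 < size S)%N by lia.
have [s1 [e1 inv1]] := prelude_run v n0.
have [s2 [e2 inv2]] := scan_loop_run (add0n _) inv1.
exists (8 + ((7 * size S).+1 + 1))%N, (rupd s2 0 (reval s2 best_height_exp)).
split; first exact: ExSeq e1 (ExSeq e2 (ExRStore _ _ _)).
split; first by lia.
move=> c; rewrite (_ : rmem _ 0 = reval s2 best_height_exp) // (best_height_exp_val inv2).
by apply: best_height_optimal => //; apply: scan_minmax.
Qed.
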